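(* Let $V$ be an object of $\mathcal{E}_q^{deg}$ and let $$E_V=\prod_{\alpha:A\hookrightarrow V,\ A\in\mathcal{S}_V\setminus\{V\}}(1+e_\alpha)\in\mathbb{F}_2[\mathrm{End}_{\mathrm{Sp}(\mathcal{E}_q^{deg})}(V)],$$ the product over all proper subobjects of $V$. Then (1) $E_V\cdot E_V=E_V$, and (2) $Q_V\cdot E_V\cong iso_V$; in particular $\mathrm{Hom}_{\mathcal{F}_{iso}}(iso_V,F)\cong F(E_V)\cdot F(V)$ for every $F\in\mathcal{F}_{iso}$.
   Context: $\mathcal{E}$: all $\mathbb{F}_2$-vector spaces. $\mathcal{E}_q^{deg}$: objects finite-dimensional quadratic spaces over $\mathbb{F}_2$ (possibly degenerate), morphisms injective linear maps preserving quadratic forms. $\mathrm{Sp}(\mathcal{E}_q^{deg})$: same objects, morphisms spans $[V\leftarrow D\rightarrow W]$ up to iso of $D$, composed by pullback. $\mathcal{F}_{iso}=\mathrm{Func}(\mathrm{Sp}(\mathcal{E}_q^{deg}),\mathcal{E})$. $\mathcal{S}_V$ is the set of subobjects $\alpha:A\hookrightarrow V$ of $V$ in $\mathcal{E}_q^{deg}$ (linear subspaces with restricted form); $\mathcal{S}_V\setminus\{V\}$ the proper ones. $e_\alpha=[V\xleftarrow{\alpha}A\xrightarrow{\alpha}V]$. $Q_V=\mathbb{F}_2[\mathrm{Hom}_{\mathrm{Sp}(\mathcal{E}_q^{deg})}(V,-)]$, and for $e$ in the monoid algebra of $\mathrm{End}(V)$, $Q_V\cdot e$ is the image of $x\mapsto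 x\circ e$ on $Q_V$. The isotropic functor $iso_V$ is the image of $a_V:Q_V\to DQ_V$, where $DF=(-)^*\circ F\circ tr^{op}$, $tr[V\leftarrow X\rightarrow W]=[W\leftarrow X\rightarrow V]$, and $a_V$ corresponds by Yoneda to the linear form on $\mathbb{F}_2[\mathrm{End}(V)]$ equal to $1$ on $\mathrm{Id}_V$ and $0$ on all other basis elements. *)

From HB Require Import structures.
From mathcomp Require Import all_boot all_order all_algebra.
Set Implicit Arguments. Unset Strict Implicit. Unset Printing Implicit Defensive.
Import GRing.Theory.
Local Open Scope ring_scope.

(* Objects of E_q^deg: finite-dimensional quadratic spaces over F_2.         *)
(* Every f.d. F_2-space is iso to F_2^n, so we take carriers 'rV['F_2]_n.    *)

Definition polar (n : nat) (q : 'rV['F_2]_n -> 'F_2) (x y : 'rV['F_2]_n) : 'F_2 :=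
  q (x + y) - q x - q y.

(* q is a quadratic form: q(0)=0 (i.e. q(lx)=l^2 q(x) over F_2) and its polar
   form is bilinear (additivity = linearity over F_2; symmetry is automatic). *)
Definition is_quadform (n : nat) (q : 'rV['F_2]_n -> 'F_2) : Prop :=
  q 0 = 0 /\ forall x y z, polar q (x + y) z = polar q x z + polar q y z.

Record qspace := QSpace {
  qdim : nat;
  qform : 'rV['F_2]_qdim -> 'F_2;
  qformP : is_quadform qform }.

Notation carrier V := ('rV['F_2]_(qdim V)).

(* Morphisms of Sp(E_q^deg).  A span [V <- D -> W] with injective isometric  *)
(* legs, up to iso of D, is the same as its image in V (+) W: a subspace G   *)
(* of V x W on which both projections are injective and q_V o p1 = q_W o p2. *)
(* Composition by pullback is relational composition.                       *)

Definition is_spmor (V W : qspace) (G : {set carrier V * carrier W}) : bool :=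
  [&& ((0 : carrier V), (0 : carrier W)) \in G,
      [forall x in G, forall y in G, (x.1 + y.1, x.2 + y.2) \in G],
      [forall x in G, forall y in G, (x.1 == y.1) == (x.2 == y.2)]
    & [forall x in G, @qform V x.1 == @qform W x.2]].

Notation spHom V W := {G : {set carrier V * carrier W} | is_spmor G}.

Section SpMor.
Variables V W : qspace.
Implicit Types f : spHom V W.

Lemma spmor0 f : ((0 : carrier V), (0 : carrier W)) \in val f.
Proof. by case: f => G /= /and4P[]. Qed.

Lemma spmorD f x y : x \in val f -> y \in val f -> (x.1 + y.1, x.2 + y.2) \in val f.
Proof.
case: f => G /= /and4P[_ /forall_inP hD _ _] xG yG.
exact: (forall_inP (hD x xG) y yG).
Qed.

Lemma spmor_inj f x y : x \in val f -> y \in val f -> (x.1 == y.1) = (x.2 == y.2).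
Proof.
case: f => G /= /and4P[_ _ /forall_inP hI _] xG yG.
have := forall_inP (hI x xG) y yG; by move/eqP.
Qed.

Lemma spmorq f x : x \in val f -> @qform V x.1 = @qform W x.2.
Proof.
case: f => G /= /and4P[_ _ _ /forall_inP hq] xG.
apply/eqP; exact: hq.
Qed.
End SpMor.

Definition comp_set (U V W : qspace) (g : spHom V W) (f : spHom U V)
  : {set carrier U * carrier W} :=
  [set p | [exists v : carrier V, ((p.1, v) \in val f) && ((v, p.2) \in val g)]].

Lemma comp_spmor (U V W : qspace) (g : spHom V W) (f : spHom U V) :
  is_spmor (comp_set g f).
Proof.
apply/and4P; split.
- by rewrite inE; apply/existsP; exists 0; rewrite /= !spmor0.
- apply/forall_inP => x; rewrite inE => /existsP[v /andP[xf vg]].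
  apply/forall_inP => y; rewrite inE => /existsP[w /andP[yf wg]].
  rewrite inE; apply/existsP; exists (v + w).
  by have /= -> := spmorD xf yf; have /= -> := spmorD vg wg.
- apply/forall_inP => x; rewrite inE => /existsP[v /andP[xf vg]].
  apply/forall_inP => y; rewrite inE => /existsP[w /andP[yf wg]].
  have /= -> := spmor_inj xf yf; have /= -> := spmor_inj vg wg.
  exact: eqxx.
- apply/forall_inP => x; rewrite inE => /existsP[v /andP[xf vg]].
  by have /= -> := spmorq xf; have /= -> := spmorq vg.
Qed.

Definition comp (U V W : qspace) (g : spHom V W) (f : spHom U V) : spHom U W :=
  exist _ (comp_set g f) (comp_spmor g f).

Definition id_set (V : qspace) : {set carrier V * carrier V} :=
  [set p | p.1 == p.2].

Lemma id_spmor (V : qspace) : is_spmor (id_set V).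
Proof.
apply/and4P; split.
- by rewrite inE.
- apply/forall_inP => x; rewrite inE => /eqP e1.
  apply/forall_inP => y; rewrite inE => /eqP e2.
  by rewrite inE /= e1 e2.
- apply/forall_inP => x; rewrite inE => /eqP e1.
  apply/forall_inP => y; rewrite inE => /eqP e2.
  by rewrite e1 e2.
- by apply/forall_inP => x; rewrite inE => /eqP ->.
Qed.

Definition idm (V : qspace) : spHom V V := exist _ (id_set V) (id_spmor V).

Definition tr_set (V W : qspace) (f : spHom V W) : {set carrier W * carrier V} :=
  [set p | (p.2, p.1) \in val f].

Lemma tr_spmor (V W : qspace) (f : spHom V W) : is_spmor (tr_set f).
Proof.
apply/and4P; split.
- by rewrite inE /= spmor0.
- apply/forall_inP => x; rewrite inE => xf.
  apply/forall_inP => y; rewrite inE => yf.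
  by rewrite inE; have /= := spmorD xf yf.
- apply/forall_inP => x; rewrite inE => xf.
  apply/forall_inP => y; rewrite inE => yf.
  by have /= -> := spmor_inj xf yf.
- by apply/forall_inP => x; rewrite inE => xf; have /= -> := spmorq xf.
Qed.

Definition tr (V W : qspace) (f : spHom V W) : spHom W V :=
  exist _ (tr_set f) (tr_spmor f).

(* Subobjects alpha : A >-> V of V in E_q^deg = linear subspaces of V
   (with the restricted form). Over F_2, subspace = contains 0 + closed under +. *)
Definition is_subsp (V : qspace) (A : {set carrier V}) : bool :=
  (0 \in A) && [forall x in A, forall y in A, x + y \in A].

(* e_alpha = [V <-alpha- A -alpha-> V], i.e. the diagonal of A.
   (For a subspace A the set below is a morphism; insubd only supplies a
   default so that the definition is total.) *)
Definition diagm (V : qspace) (A : {set carrier V}) : spHom V V :=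
  insubd (idm V) [set p : carrier V * carrier V | (p.1 == p.2) && (p.1 \in A)].

(* Monoid algebras F_2[Hom(V,W)] and composition extended bilinearly.        *)

Notation Alg V W := {ffun spHom V W -> 'F_2}.

Definition delta (V W : qspace) (g : spHom V W) : Alg V W :=
  [ffun h => (h == g)%:R].

Definition conv (U V W : qspace) (x : Alg V W) (e : Alg U V) : Alg U W :=
  [ffun h => \sum_(g : spHom V W) \sum_(f : spHom U V | comp g f == h) x g * e f].

(* E_V = prod over proper subobjects alpha of (1 + e_alpha) in F_2[End(V)]
   (the factors commute, so the order of the product is irrelevant). *)
Definition EV (V : qspace) : Alg V V :=
  \big[@conv V V V / delta (idm V)]_(A : {set carrier V} | is_subsp A && (A != setT))
     (delta (idm V) + delta (diagm A)).

(* Q_V(W) = F_2[Hom(V,W)],  Q_V(g) x = g o x. *)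
Definition Qmap (V W W' : qspace) (g : spHom W W') (x : Alg V W) : Alg V W' :=
  conv (delta g) x.

(* (Q_V . e)(W) = image of x |-> x o e. *)
Definition QE (V W : qspace) (e : Alg V V) : {set Alg V W} :=
  [set conv x e | x : Alg V W].

(* DQ_V(W) = Q_V(W)^*, identified with functions Hom(V,W) -> F_2 (linear forms
   on the finite basis).  DQ_V(g) = Q_V(tr g)^*. *)
Definition DQmap (V W W' : qspace) (g : spHom W W') (phi : Alg V W) : Alg V W' :=
  [ffun b => phi (comp (tr g) b)].

(* a_V : Q_V -> DQ_V, the Yoneda image of the linear form delta_{Id_V}:
   a_V(W)(x)(b) = sum_g x(g) * [tr g o b = Id_V]. *)
Definition aV (V W : qspace) (x : Alg V W) : Alg V W :=
  [ffun b => \sum_(g : spHom V W) x g * (comp (tr g) b == idm V)%:R].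

Definition isoV (V W : qspace) : {set Alg V W} := [set aV x | x : Alg V W].

(* Objects of F_iso: functors Sp(E_q^deg) -> F_2-vector spaces.             *)

Record spFunctor := SpFunctor {
  Fob : qspace -> lmodType 'F_2;
  Fmor : forall V W : qspace, spHom V W -> Fob V -> Fob W;
  Fmor_linear : forall V W (g : spHom V W) (a : 'F_2) (x y : Fob V),
      Fmor g (a *: x + y) = a *: Fmor g x + Fmor g y;
  Fmor_id : forall V (x : Fob V), Fmor (idm V) x = x;
  Fmor_comp : forall U V W (f : spHom U V) (g : spHom V W) (x : Fob U),
      Fmor (comp g f) x = Fmor g (Fmor f x) }.

Definition Fact (F : spFunctor) (V : qspace) (e : Alg V V) (y : Fob F V) : Fob F V :=
  \sum_(f : spHom V V) e f *: @Fmor F _ _ f y.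

Definition Fimage (F : spFunctor) (V : qspace) (e : Alg V V) (y : Fob F V) : Prop :=
  exists z, y = Fact e z.

(* A natural transformation iso_V -> F (linearity over F_2 = additivity), given by families of maps defined on
   the ambient DQ_V(W) of which only the restriction to iso_V(W) matters. *)
Definition is_nat_from_iso (V : qspace) (F : spFunctor)
    (eta : forall W : qspace, Alg V W -> Fob F W) : Prop :=
  (forall W (x y : Alg V W), x \in isoV V W -> y \in isoV V W ->
      eta W (x + y) = eta W x + eta W y) /\
  (forall W W' (g : spHom W W') (x : Alg V W), x \in isoV V W ->
      eta W' (DQmap g x) = @Fmor F _ _ g (eta W x)).

(* The spans of V to itself in the support of E_V are diagonals e_A, and these
   compose by e_A e_B = e_(A :&: B).  So the factors 1 + e_A of E_V commute, and
   e_B E_V = 0 for every proper B, because e_B (1 + e_B) = 2 e_B = 0.  A non-total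
   span g factors as g e_(dom g), hence g E_V = 0, while E_V is Id plus terms on
   proper diagonals, so x E_V agrees with x on total spans.  Now a_V is just the
   restriction to total spans (tr h o b = Id iff h = b and b is total), hence
   a_V(x E_V) = a_V(x) and x E_V = a_V(x) E_V: this gives E_V^2 = E_V and
   identifies Q_V E_V with iso_V.  A natural transformation out of iso_V is
   determined by its value at a_V(Id), which is fixed by F(E_V); conversely each
   y = F(E_V) z is killed by the non-total spans, so x |-> F(x) y is natural. *)
From Pilot Require Import Defs.
From HB Require Import structures.
From mathcomp Require Import all_boot all_order all_algebra.
Set Implicit Arguments. Unset Strict Implicit. Unset Printing Implicit Defensive.
Import GRing.Theory.
Local Open Scope ring_scope.
Local Notation comp := Defs.comp.

Section SpanCategory.
Implicit Types U V W X : qspace.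

Lemma spmorP V W (f g : spHom V W) : val f =i val g -> f = g.
Proof. by move=> fg; apply/val_inj/setP. Qed.

Lemma compE U V W (g : spHom V W) (f : spHom U V) u w :
  ((u, w) \in val (comp g f)) = [exists v, ((u, v) \in val f) && ((v, w) \in val g)].
Proof. by rewrite inE. Qed.

Lemma compA U V W X (h : spHom W X) (g : spHom V W) (f : spHom U V) :
  comp h (comp g f) = comp (comp h g) f.
Proof.
apply: spmorP => -[u x]; rewrite !compE; apply/existsP/existsP.
- case=> w /andP[]; rewrite compE => /existsP[v /andP[uv vw wx]].
  by exists v; rewrite uv compE; apply/existsP; exists w; rewrite vw.
- case=> v /andP[uv]; rewrite compE => /existsP[w /andP[vw wx]].
  by exists w; rewrite wx compE andbT; apply/existsP; exists v; rewrite uv.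
Qed.

Lemma compm1 V W (g : spHom V W) : comp g (idm V) = g.
Proof.
apply: spmorP => -[u w]; rewrite compE; apply/existsP/idP.
- by case=> v /andP[]; rewrite inE /= => /eqP <-.
- by move=> uw; exists u; rewrite inE eqxx.
Qed.

Lemma comp1m V W (g : spHom V W) : comp (idm W) g = g.
Proof.
apply: spmorP => -[u w]; rewrite compE; apply/existsP/idP.
- by case=> v /andP[uv]; rewrite inE /= => /eqP <-.
- by move=> uw; exists w; rewrite inE eqxx andbT.
Qed.

Lemma trE V W (f : spHom V W) w v : ((w, v) \in val (tr f)) = ((v, w) \in val f).
Proof. by rewrite inE. Qed.

Lemma tr_comp U V W (g : spHom V W) (f : spHom U V) :
  tr (comp g f) = comp (tr f) (tr g).
Proof.
apply: spmorP => -[w u]; rewrite trE !compE; apply/existsP/existsP.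
- by case=> v /andP[uv vw]; exists v; rewrite !trE uv vw.
- by case=> v; rewrite !trE => /andP[vw uv]; exists v; rewrite uv vw.
Qed.

End SpanCategory.

Section Diagonals.
Variable V : qspace.
Implicit Types A B : {set carrier V}.

Lemma subspT : is_subsp [set: carrier V].
Proof. by rewrite /is_subsp inE; apply/'forall_in_forall_inP => x _ y _; rewrite inE. Qed.

Lemma subspI A B : is_subsp A -> is_subsp B -> is_subsp (A :&: B).
Proof.
case/andP=> A0 /'forall_in_forall_inP AD /andP[B0 /'forall_in_forall_inP BD].
rewrite /is_subsp inE A0 B0; apply/'forall_in_forall_inP => x + y.
by rewrite !inE => /andP[xA xB] /andP[yA yB]; rewrite AD ?BD.
Qed.

Lemma diagm_spmor A : is_subsp A ->
  is_spmor [set p : carrier V * carrier V | (p.1 == p.2) && (p.1 \in A)].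
Proof.
case/andP=> A0 /'forall_in_forall_inP AD; apply/and4P; split.
- by rewrite inE /= eqxx A0.
- apply/'forall_in_forall_inP => x + y; rewrite !inE => /andP[/eqP e1 xA] /andP[/eqP e2 yA].
  by rewrite /= e1 e2 eqxx -e1 -e2 AD.
- apply/'forall_in_forall_inP => x + y; rewrite !inE => /andP[/eqP e1 _] /andP[/eqP e2 _].
  by rewrite e1 e2.
- by apply/forall_inP => x; rewrite inE => /andP[/eqP -> _].
Qed.


Lemma diagm_mem A u v : is_subsp A -> ((u, v) \in val (diagm A)) = (u == v) && (u \in A).
Proof. by move=> sA; rewrite /diagm insubdK ?inE //; apply: diagm_spmor. Qed.

Lemma comp_diagm A B : is_subsp A -> is_subsp B ->
  comp (diagm A) (diagm B) = diagm (A :&: B).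
Proof.
move=> sA sB; apply: spmorP => -[u w]; rewrite compE diagm_mem ?subspI // inE.
apply/existsP/idP => [[v]|/andP[/eqP <- /andP[uA uB]]].
  by rewrite !diagm_mem // => /andP[/andP[/eqP <- uB] /andP[/eqP <- uA]]; rewrite eqxx uA.
by exists u; rewrite !diagm_mem // eqxx uA uB.
Qed.

Lemma diagmT : diagm [set: carrier V] = idm V.
Proof. by apply: spmorP => -[u v]; rewrite diagm_mem ?subspT // in_setT andbT inE. Qed.

Lemma diagm_eq_idm A : is_subsp A -> (diagm A == idm V) = (A == setT).
Proof.
move=> sA; apply/eqP/eqP => [A1|->]; last exact: diagmT.
apply/setP => v; rewrite in_setT; have : (v, v) \in val (idm V) by rewrite inE.
by rewrite -A1 diagm_mem // eqxx.
Qed.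

End Diagonals.

Section Domain.
Implicit Types U V W : qspace.

Definition dom V W (g : spHom V W) : {set carrier V} :=
  [set v | [exists w, (v, w) \in val g]].

Definition total V W (g : spHom V W) : bool := dom g == setT.

Lemma dom_subsp V W (g : spHom V W) : is_subsp (dom g).
Proof.
rewrite /is_subsp inE; apply/andP; split; first by apply/existsP; exists 0; apply: spmor0.
apply/'forall_in_forall_inP => x + y; rewrite !inE => /existsP[w xw] /existsP[w' yw'].
by apply/existsP; exists (w + w'); apply: (spmorD xw yw').
Qed.

Lemma comp_diagm_dom V W (g : spHom V W) : comp g (diagm (dom g)) = g.
Proof.
apply: spmorP => -[u w]; rewrite compE; apply/existsP/idP => [[v]|uw].
  by rewrite diagm_mem ?dom_subsp // => /andP[/andP[/eqP -> _]].
by exists u; rewrite diagm_mem ?dom_subsp // eqxx uw inE andbT; apply/existsP; exists w.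
Qed.

Lemma dom_diagm V (A : {set carrier V}) : is_subsp A -> dom (diagm A) = A.
Proof.
move=> sA; apply/setP => v; rewrite inE; apply/existsP/idP => [[w]|vA].
  by rewrite diagm_mem // => /andP[].
by exists v; rewrite diagm_mem // eqxx.
Qed.

Lemma total_idm V : total (idm V).
Proof. by rewrite /total -diagmT dom_diagm ?subspT. Qed.

Lemma total_compr U V W (g : spHom V W) (f : spHom U V) : total (comp g f) -> total f.
Proof.
rewrite /total !eqEsubset !subsetT /= => /subset_trans; apply.
apply/subsetP => u; rewrite !inE => /existsP[w]; rewrite compE => /existsP[v /andP[uv _]].
by apply/existsP; exists v.
Qed.

(* The legs are injective, so [(u, u)] in [tr g o b] forces [b] and [g] to agree at [u]. *)
Lemma trcomp_eq_idm V W (g b : spHom V W) :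
  (comp (tr g) b == idm V) = (g == b) && total b.
Proof.
apply/eqP/andP => [gb1|[/eqP <- /eqP gT]].
  have common u : exists w, ((u, w) \in val b) && ((u, w) \in val g).
    have : (u, u) \in val (idm V) by rewrite inE.
    by rewrite -gb1 compE => /existsP[w]; rewrite trE; exists w.
  split.
    apply/eqP/spmorP => -[u w]; have [w' /andP[bw' gw']] := common u.
    apply/idP/idP => uw.
      by have := spmor_inj uw gw'; rewrite /= eqxx => /esym/eqP ->.
    by have := spmor_inj uw bw'; rewrite /= eqxx => /esym/eqP ->.
  apply/eqP/setP => u; rewrite !inE; have [w /andP[uw _]] := common u.
  by apply/existsP; exists w.
apply: spmorP => -[u u']; rewrite compE inE /=; apply/existsP/idP => [[w]|/eqP <-].
  by rewrite trE => /andP[uw u'w]; rewrite (spmor_inj uw u'w) eqxx.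
have : u \in dom g by rewrite gT inE.
by rewrite inE => /existsP[w uw]; exists w; rewrite trE uw.
Qed.

End Domain.

(* A sealed [delta]: when unification compares two unfolded [delta g h] it falls
   back on evaluating them, which enumerates the finite type of spans. *)
Lemma basis_subproof : {b : forall V W, spHom V W -> Alg V W | b = @delta}.
Proof. by exists (@delta). Qed.

Definition basis : forall V W, spHom V W -> Alg V W := sval basis_subproof.
Arguments basis {V W} g.

Lemma basisE : @basis = @delta.
Proof. exact: (svalP basis_subproof). Qed.

Section MonoidAlgebra.
Implicit Types U V W X : qspace.

Lemma basis_app V W (g h : spHom V W) : basis g h = (h == g)%:R.
Proof. by rewrite basisE ffunE. Qed.

Lemma conv_app U V W (x : Alg V W) (e : Alg U V) h :
  conv x e h = \sum_g \sum_(f | comp g f == h) x g * e f.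
Proof. by rewrite ffunE. Qed.

Lemma algDE V W (x y : Alg V W) h : (x + y) h = x h + y h.
Proof. by rewrite ffunE. Qed.

Lemma alg0E V W h : (0 : Alg V W) h = 0.
Proof. by rewrite ffunE. Qed.

Lemma F2_neq0 (c : 'F_2) : c != 0 -> c = 1.
Proof. by case: c => -[|[|]] //= ? _; apply/val_inj. Qed.

Lemma alg_addrr V W (x : Alg V W) : x + x = 0.
Proof. by apply/ffunP => h; rewrite algDE alg0E; apply/addrr_pchar2/pchar_Fp. Qed.

Lemma alg_sum_basis V W (x : Alg V W) : x = \sum_(g | x g != 0) basis g.
Proof.
apply/ffunP => h; rewrite sum_ffunE.
have [xh0|xh] := eqVneq (x h) 0.
  rewrite xh0 big1 // => g xg; rewrite basis_app.
  by have [hg|//] := eqVneq h g; rewrite -hg xh0 eqxx in xg.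
rewrite (bigD1 h) //= big1 => [|g /andP[_ gh]]; last by rewrite basis_app eq_sym (negbTE gh).
by rewrite basis_app eqxx addr0 (F2_neq0 xh).
Qed.

(* Over 'F_2 additivity is linearity, and the [basis g] span. *)
Lemma alg_additive_eq V W (M : zmodType) (f f' : Alg V W -> M) :
  {morph f : x y / x + y} -> {morph f' : x y / x + y} ->
  (forall g, f (basis g) = f' (basis g)) -> f =1 f'.
Proof.
move=> fD f'D ff' x; have f0 (h : Alg V W -> M) : {morph h : x y / x + y} -> h 0 = 0.
  by move=> hD; apply: (addrI (h 0)); rewrite -hD !addr0.
rewrite (alg_sum_basis x) (big_morph f fD (f0 f fD)) (big_morph f' f'D (f0 f' f'D)).
exact: eq_bigr.
Qed.

Lemma convDl U V W (x y : Alg V W) (e : Alg U V) : conv (x + y) e = conv x e + conv y e.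
Proof.
apply/ffunP => h; rewrite algDE !conv_app -big_split; apply: eq_bigr => g _.
by rewrite -big_split; apply: eq_bigr => f _; rewrite algDE mulrDl.
Qed.

Lemma convDr U V W (x : Alg V W) (e e' : Alg U V) : conv x (e + e') = conv x e + conv x e'.
Proof.
apply/ffunP => h; rewrite algDE !conv_app -big_split; apply: eq_bigr => g _.
by rewrite -big_split; apply: eq_bigr => f _; rewrite algDE mulrDr.
Qed.

Lemma conv0l U V W (e : Alg U V) : conv (0 : Alg V W) e = 0.
Proof.
apply/ffunP => h; rewrite conv_app alg0E big1 // => g _.
by rewrite big1 // => f _; rewrite alg0E mul0r.
Qed.

Lemma conv0r U V W (x : Alg V W) : conv x (0 : Alg U V) = 0.
Proof.
apply/ffunP => h; rewrite conv_app alg0E big1 // => g _.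
by rewrite big1 // => f _; rewrite alg0E mulr0.
Qed.

Lemma conv_neq0 U V W (x : Alg V W) (e : Alg U V) h :
  conv x e h != 0 -> exists g f, [/\ x g != 0, e f != 0 & comp g f = h].
Proof.
move=> xeh; suff /existsP[g /existsP[f /and3P[xg ef /eqP gfh]]] :
    [exists g, exists f, [&& x g != 0, e f != 0 & comp g f == h]] by exists g, f.
apply: contraR xeh => /existsPn nogf; rewrite conv_app big1 // => g _.
rewrite big1 // => f gfh; have /existsPn/(_ f) := nogf g.
by rewrite gfh andbT negb_and !negbK => /orP[] /eqP->; rewrite ?mul0r ?mulr0.
Qed.

Lemma conv_basisl U V W (g : spHom V W) (e : Alg U V) h :
  conv (basis g) e h = \sum_(f | comp g f == h) e f.
Proof.
rewrite conv_app (bigD1 g) //= [X in _ + X]big1 => [|g' g'g]; last first.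
  by rewrite big1 // => f _; rewrite basis_app (negbTE g'g) mul0r.
by rewrite addr0; apply: eq_bigr => f _; rewrite basis_app eqxx mul1r.
Qed.

Lemma conv_basis U V W (g : spHom V W) (f : spHom U V) :
  conv (basis g) (basis f) = basis (comp g f).
Proof.
apply/ffunP => h; rewrite conv_basisl big_mkcond (bigD1 f) //= big1 => [|f' f'f]; last first.
  by rewrite basis_app (negbTE f'f) if_same.
by rewrite [in RHS]basis_app addr0 eq_sym; case: eqP => _; rewrite ?basis_app ?eqxx.
Qed.

Lemma convA U V W X (x : Alg W X) (y : Alg V W) (z : Alg U V) :
  conv (conv x y) z = conv x (conv y z).
Proof.
move: x; apply: alg_additive_eq => [x x'|x x'|g]; rewrite ?(convDl, convDr) //.
move: y; apply: alg_additive_eq => [y y'|y y'|f]; rewrite ?(convDl, convDr) //.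
move: z; apply: alg_additive_eq => [z z'|z z'|e]; rewrite ?(convDl, convDr) //.
by rewrite !conv_basis compA.
Qed.

Lemma conv1l V W (x : Alg V W) : conv (basis (idm W)) x = x.
Proof.
move: x; apply: alg_additive_eq => [x x'|//|g]; first by rewrite convDr.
by rewrite conv_basis comp1m.
Qed.

Lemma conv1r V W (x : Alg V W) : conv x (basis (idm V)) = x.
Proof.
move: x; apply: alg_additive_eq => [x x'|//|g]; first by rewrite convDl.
by rewrite conv_basis compm1.
Qed.

End MonoidAlgebra.

Section Idempotent.
Variable V : qspace.
Implicit Types A B : {set carrier V}.
Implicit Types x y : Alg V V.

Definition proper_subsp A := is_subsp A && (A != setT).

Definition diag_supported x : Prop :=
  forall f, x f != 0 -> exists2 A, is_subsp A & f = diagm A.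

Lemma EV_basis : EV V =
  \big[@conv V V V / basis (idm V)]_(A | proper_subsp A) (basis (idm V) + basis (diagm A)).
Proof. by rewrite basisE. Qed.

Lemma diag_supported_basis A : is_subsp A -> diag_supported (basis (diagm A)).
Proof.
move=> sA f; rewrite basis_app; have [->|_] := eqVneq f (diagm A); first by exists A.
by rewrite eqxx.
Qed.

Lemma diag_supportedD x y :
  diag_supported x -> diag_supported y -> diag_supported (x + y).
Proof.
move=> dx dy f; rewrite algDE; have [xf0|/dx//] := eqVneq (x f) 0.
by rewrite xf0 add0r; apply: dy.
Qed.

Lemma diag_supported_conv x y :
  diag_supported x -> diag_supported y -> diag_supported (conv x y).
Proof.
move=> dx dy f /conv_neq0[g [h [/dx[A sA ->] /dy[B sB ->] <-]]].
by exists (A :&: B); rewrite ?subspI ?comp_diagm.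
Qed.

(* Only [Id o Id] lands on [Id], as [A :&: B = V] forces [A = B = V]. *)
Lemma conv_diag_supported_idm x y : diag_supported x -> diag_supported y ->
  conv x y (idm V) = x (idm V) * y (idm V).
Proof.
move=> dx dy; rewrite conv_app (bigD1 (idm V)) //= [X in _ + X]big1 => [|g gid]; last first.
  rewrite big1 // => f /eqP gf1; have [->|/dx[A sA gA]] := eqVneq (x g) 0.
    by rewrite mul0r.
  have [->|/dy[B sB fB]] := eqVneq (y f) 0; first by rewrite mulr0.
  move: gf1 gid; rewrite gA fB comp_diagm // => /eqP; rewrite !diagm_eq_idm ?subspI //.
  move=> /eqP ABT /negP[]; apply/eqP/setP => v.
  by move/setP/(_ v): ABT; rewrite !inE => /andP[].
by rewrite addr0 (big_pred1 (idm V)) // => f; rewrite /= comp1m.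
Qed.

Lemma EV_diag_supported : diag_supported (EV V) /\ EV V (idm V) = 1.
Proof.
have d1 : diag_supported (basis (idm V)) by rewrite -diagmT; apply/diag_supported_basis/subspT.
rewrite EV_basis; apply: (big_ind (fun x => diag_supported x /\ x (idm V) = 1)).
- by rewrite basis_app eqxx.
- move=> x y [dx x1] [dy y1]; split; first exact: diag_supported_conv.
  by rewrite conv_diag_supported_idm // x1 y1 mulr1.
move=> A /andP[sA AT]; split; first exact/diag_supportedD/diag_supported_basis.
rewrite algDE [X in X + _]basis_app [X in _ + X]basis_app eqxx.
by rewrite eq_sym diagm_eq_idm // (negbTE AT) addr0.
Qed.

Lemma EV_support f : EV V f != 0 -> f != idm V -> ~~ total f.
Proof.
case: EV_diag_supported => dEV _ /dEV[A sA ->]; rewrite diagm_eq_idm //.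
by rewrite /total dom_diagm.
Qed.

Lemma conv_diagm_factor A : is_subsp A ->
  conv (basis (diagm A)) (basis (idm V) + basis (diagm A)) = 0.
Proof.
move=> sA; rewrite convDr conv1r conv_basis comp_diagm // setIid.
exact: alg_addrr.
Qed.

Lemma conv_diagm_factorC A B : is_subsp A -> is_subsp B ->
  conv (basis (diagm B)) (basis (idm V) + basis (diagm A)) =
  conv (basis (idm V) + basis (diagm A)) (basis (diagm B)).
Proof.
move=> sA sB; rewrite convDr convDl conv1r conv1l !conv_basis !comp_diagm //.
by rewrite setIC.
Qed.

(* The factors commute, so [e_B] meets its own factor, and [e_B (1 + e_B) = 2 e_B = 0]. *)
Lemma conv_diagm_prod (r : seq {set carrier V}) B : B \in r -> proper_subsp B ->
  conv (basis (diagm B))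
    (\big[@conv V V V / basis (idm V)]_(A <- r | proper_subsp A) (basis (idm V) + basis (diagm A)))
  = 0.
Proof.
move=> + prB; have /andP[sB _] := prB; elim: r => [|A r IHr]; first by rewrite in_nil.
rewrite in_cons big_cons; case: ifP => [/andP[sA _]|nprA]; last first.
  by case/orP=> [/eqP BA|]; [rewrite -BA prB in nprA | exact: IHr].
rewrite -convA; case/orP=> [/eqP->|Br]; first by rewrite conv_diagm_factor // conv0l.
by rewrite conv_diagm_factorC // convA (IHr Br) conv0r.
Qed.

Lemma conv_diagm_EV B : proper_subsp B -> conv (basis (diagm B)) (EV V) = 0.
Proof. by rewrite EV_basis; apply/conv_diagm_prod/mem_index_enum. Qed.

End Idempotent.

Lemma conv_nontotal_EV V W (g : spHom V W) : ~~ total g -> conv (basis g) (EV V) = 0.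
Proof.
move=> gT; rewrite -(comp_diagm_dom g) -conv_basis convA conv_diagm_EV ?conv0r //.
by rewrite /proper_subsp dom_subsp.
Qed.

(* Only [f = Id] contributes: any other [f] in the support of [E_V] is non-total,
   and then so is [g o f]. *)
Lemma conv_EV_total V W (x : Alg V W) b : total b -> conv x (EV V) b = x b.
Proof.
move=> bT; move: x; apply: alg_additive_eq => [x y|x y|g]; rewrite ?(convDl, algDE) //.
rewrite conv_basisl basis_app big_mkcond (bigD1 (idm V)) //= big1 => [|f f1]; last first.
  case: eqP => [gfb|//]; apply: contraNeq f1 => /EV_support/contraTT; apply.
  by apply: (@total_compr _ _ _ g); rewrite gfb.
have [_ ->] := EV_diag_supported V; rewrite compm1 addr0 eq_sym.
by case: eqP.
Qed.

Section Restriction.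
Variables V W : qspace.
Implicit Types x y : Alg V W.

Lemma aV_basis (f b : spHom V W) : aV (basis f) b = (comp (tr f) b == idm V)%:R.
Proof.
rewrite ffunE (bigD1 f) //= [X in _ + X]big1 => [|g gf]; last by rewrite basis_app (negbTE gf) mul0r.
by rewrite basis_app eqxx mul1r addr0.
Qed.

Lemma aVD : {morph @aV V W : x y / x + y}.
Proof.
move=> x y; apply/ffunP => b; rewrite algDE !ffunE -big_split.
by apply: eq_bigr => g _; rewrite algDE mulrDl.
Qed.

Lemma aVE x b : aV x b = if total b then x b else 0.
Proof.
move: x; apply: (alg_additive_eq (f := fun x => aV x b)) => [x y|x y|g].
- by rewrite aVD algDE.
- by rewrite algDE; case: ifP; rewrite ?addr0.
by rewrite aV_basis trcomp_eq_idm basis_app eq_sym; case: (total b); rewrite ?andbT ?andbF.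
Qed.

Lemma aV_basis_total (g : spHom V W) : aV (basis g) = if total g then basis g else 0.
Proof.
apply/ffunP => b; rewrite aVE basis_app.
have [->|bg] := eqVneq b g; first by case: (total g); rewrite ?basis_app ?eqxx ?alg0E.
by rewrite if_same; case: (total g); rewrite ?basis_app ?(negbTE bg) ?alg0E.
Qed.

Lemma aV_conv_EV x : aV (conv x (EV V)) = aV x.
Proof. by apply/ffunP => b; rewrite !aVE; case: ifP => // /conv_EV_total->. Qed.

Lemma conv_EV_aV x : conv x (EV V) = conv (aV x) (EV V).
Proof.
move: x; apply: alg_additive_eq => [x y|x y|g]; rewrite ?(aVD, convDl) //.
by rewrite aV_basis_total; case: ifPn => [//|/conv_nontotal_EV->]; rewrite conv0l.
Qed.

Lemma aV_injQE : {in QE W (EV V) &, injective (@aV V W)}.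
Proof.
move=> _ _ /imsetP[x _ ->] /imsetP[y _ ->]; rewrite !aV_conv_EV => xy.
by rewrite conv_EV_aV xy -conv_EV_aV.
Qed.

Lemma aV_QE : [set aV x | x in QE W (EV V)] = isoV V W.
Proof.
apply/setP => y; apply/imsetP/imsetP => [[x _ ->]|[x _ ->]]; first by exists x.
by exists (conv x (EV V)); rewrite ?aV_conv_EV //; apply/imsetP; exists x.
Qed.

End Restriction.

Lemma aV_nat V W W' (g : spHom W W') (x : Alg V W) :
  aV (conv (basis g) x) = DQmap g (aV x).
Proof.
move: x; apply: alg_additive_eq => [x y|x y|f].
- by rewrite convDr aVD.
- by apply/ffunP => b; rewrite aVD !ffunE.
apply/ffunP => b; rewrite conv_basis aV_basis /DQmap ffunE aV_basis.
by rewrite tr_comp compA.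
Qed.

Lemma aV_EV V : aV (EV V) = basis (idm V).
Proof.
apply/ffunP => b; rewrite aVE basis_app.
have [->|b1] := eqVneq b (idm V); first by have [_ ->] := EV_diag_supported V; rewrite total_idm.
by case: ifP => // bT; apply/eqP; apply: contraTT bT => /EV_support; apply.
Qed.

Lemma EV_idem V : conv (EV V) (EV V) = EV V.
Proof. by rewrite conv_EV_aV aV_EV conv1l. Qed.

Section Functor.
Variable F : spFunctor.
Implicit Types U V W : qspace.

Lemma FmorD V W (g : spHom V W) : {morph @Fmor F _ _ g : x y / x + y}.
Proof. by move=> x y; have := Fmor_linear g 1 x y; rewrite !scale1r. Qed.

(* On endomorphisms this is [Fact]. *)
Definition Falg U W (x : Alg U W) (y : Fob F U) : Fob F W :=
  \sum_(g : spHom U W) x g *: @Fmor F _ _ g y.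

Lemma FalgDl U W (x x' : Alg U W) y : Falg (x + x') y = Falg x y + Falg x' y.
Proof. by rewrite /Falg -big_split; apply: eq_bigr => g _; rewrite algDE scalerDl. Qed.

Lemma Falg0 U W y : Falg (0 : Alg U W) y = 0.
Proof. by rewrite /Falg big1 // => g _; rewrite alg0E scale0r. Qed.

Lemma Falg_basis U W (g : spHom U W) y : Falg (basis g) y = Fmor g y.
Proof.
rewrite /Falg (bigD1 g) //= big1 => [|h hg]; last by rewrite basis_app (negbTE hg) scale0r.
by rewrite basis_app eqxx scale1r addr0.
Qed.

Lemma Falg_conv U V W (x : Alg V W) (e : Alg U V) y :
  Falg (conv x e) y = Falg x (Falg e y).
Proof.
move: x; apply: alg_additive_eq => [x x'|x x'|g]; rewrite ?convDl ?FalgDl //.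
move: e; apply: (alg_additive_eq (f := fun e => Falg (conv (basis g) e) y)) => [e e'|e e'|f].
- by rewrite convDr FalgDl.
- by rewrite !Falg_basis FalgDl FmorD.
by rewrite conv_basis !Falg_basis Fmor_comp.
Qed.

Lemma Falg_aV V W (x : Alg V W) y :
  (forall W' (g : spHom V W'), ~~ total g -> Fmor g y = 0) -> Falg (aV x) y = Falg x y.
Proof.
move=> y0; move: x; apply: alg_additive_eq => [x x'|x x'|g]; rewrite ?aVD ?FalgDl //.
rewrite aV_basis_total; case: ifPn => // gT.
by rewrite Falg0 Falg_basis y0.
Qed.

Lemma Fmor_nontotal_EV V W (g : spHom V W) z : ~~ total g -> Fmor g (Falg (EV V) z) = 0.
Proof. by move=> gT; rewrite -Falg_basis -Falg_conv (conv_nontotal_EV gT) Falg0. Qed.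

Lemma aV_isoV V W (x : Alg V W) : aV x \in isoV V W.
Proof. by apply/imsetP; exists x. Qed.

Lemma nat_from_isoE V (eta : forall W, Alg V W -> Fob F W) : is_nat_from_iso eta ->
  forall W (x : Alg V W), eta W (aV x) = Falg x (eta V (aV (basis (idm V)))).
Proof.
move=> [etaD etaN] W; apply: (alg_additive_eq (f := fun x => eta W (aV x))) => [x y|x y|g].
- by rewrite aVD etaD ?aV_isoV.
- exact: FalgDl.
have -> : aV (basis g) = DQmap g (aV (basis (idm V))) by rewrite -aV_nat conv1r.
by rewrite etaN ?aV_isoV // Falg_basis.
Qed.

Lemma nat_from_iso_EV V (eta : forall W, Alg V W -> Fob F W) : is_nat_from_iso eta ->
  eta V (aV (basis (idm V))) = Falg (EV V) (eta V (aV (basis (idm V)))).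
Proof.
move=> Heta; rewrite -nat_from_isoE //.
by rewrite aV_EV aV_basis_total total_idm.
Qed.

Lemma Falg_nat_from_iso V (y : Fob F V) :
  (forall W (g : spHom V W), ~~ total g -> Fmor g y = 0) ->
  is_nat_from_iso (fun W (phi : Alg V W) => Falg phi y).
Proof.
move=> y0; split=> [W x x' _ _|W W' g _ /imsetP[x _ ->]]; first exact: FalgDl.
by rewrite -aV_nat !Falg_aV // Falg_conv Falg_basis.
Qed.

End Functor.

Theorem proposition4p32 (V : qspace) :
  conv (EV V) (EV V) = EV V /\
  (exists phi : forall W : qspace, Alg V W -> Alg V W,
     (forall W, {in QE W (EV V) &, forall x y, phi W (x + y) = phi W x + phi W y}) /\
     (forall W, {in QE W (EV V) &, injective (phi W)}) /\
     (forall W, [set phi W x | x in QE W (EV V)] = isoV V W) /\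
     (forall W W' (g : spHom W W') (x : Alg V W), x \in QE W (EV V) ->
        phi W' (Qmap g x) = DQmap g (phi W x))) /\
  (forall F : spFunctor,
     exists Phi : (forall W : qspace, Alg V W -> Fob F W) -> Fob F V,
       (forall eta eta', is_nat_from_iso eta -> is_nat_from_iso eta' ->
          (Phi eta = Phi eta' <-> forall W, {in isoV V W, eta W =1 eta' W})) /\
       (forall eta, is_nat_from_iso eta -> Fimage (EV V) (Phi eta)) /\
       (forall y, Fimage (EV V) y -> exists eta, is_nat_from_iso eta /\ Phi eta = y) /\
       (forall eta1 eta2 eta3,
          is_nat_from_iso eta1 -> is_nat_from_iso eta2 -> is_nat_from_iso eta3 ->
          (forall W, {in isoV V W, forall x, eta3 W x = eta1 W x + eta2 W x}) ->
          Phi eta3 = Phi eta1 + Phi eta2)).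
Proof.
split; first exact: EV_idem.
split.
  exists (fun W => @aV V W); split; first by move=> W x y _ _; apply: aVD.
  split; first by move=> W; apply: aV_injQE.
  split; first by move=> W; apply: aV_QE.
  by move=> W W' g x _; rewrite /Qmap -basisE aV_nat.
move=> F; exists (fun eta : forall W, Alg V W -> Fob F W => eta V (aV (basis (idm V)))).
split.
  move=> eta eta' Heta Heta'; split=> [e W _ /imsetP[x _ ->]|e]; last exact/e/aV_isoV.
  by rewrite (nat_from_isoE Heta) (nat_from_isoE Heta') e.
split.
  by move=> eta Heta; exists (eta V (aV (basis (idm V)))); apply: nat_from_iso_EV.
split.
  move=> _ [z ->]; exists (fun W phi => Falg phi (Fact (EV V) z)).
  split; first by apply: Falg_nat_from_iso => W g; apply: Fmor_nontotal_EV.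
  by rewrite aV_basis_total total_idm Falg_basis Fmor_id.
by move=> eta1 eta2 eta3 _ _ _; apply; apply: aV_isoV.
Qed.
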